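(* Let $A=B[x;\alpha,\delta]_p$ be a Poisson polynomial algebra over a field $k$ of characteristic zero, with $\delta$ locally nilpotent and $\alpha\delta=\delta(\alpha+s)$ for some $s\in k^\times$, and let $\theta:B\to B[x^{\pm1}]$ be given by $\theta(b)=\sum_{n\ge0}\frac{1}{n!}\left(\frac{-1}{s}\right)^n\delta^n(b)x^{-n}$. Then $\theta$ extends uniquely to an isomorphism of Poisson Laurent polynomial algebras $\theta:B[y^{\pm1};\alpha]_p\to B[x^{\pm1};\alpha,\delta]_p$ such that $\theta(y)=x$.
   Context: If $B$ is a Poisson algebra, $\alpha$ a Poisson derivation of $B$ and $\delta$ a derivation of $B$ with $\delta(\{a,b\})=\{\delta(a),b\}+\{a,\delta(b)\}+\alpha(a)\delta(b)-\delta(a)\alpha(b)$ for $a,b\in B$, then $B[x;\alpha,\delta]_p$ is $B[x]$ with the unique Poisson bracket extending that of $B$ with $\{x,b\}=\alpha(b)x+\delta(b)$, and $B[x^{\pm1};\alpha,\delta]_p$ is the unique extension of this Poisson structure to $B[x^{\pm1}]$. $B[y^{\pm1};\alpha]_p$ denotes $B[y^{\pm1};\alpha,0]_p$, i.e. $\{y,b\}=\alpha(b)y$. *)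

From HB Require Import structures.
From mathcomp Require Import all_boot all_order all_algebra.
Set Implicit Arguments. Unset Strict Implicit. Unset Printing Implicit Defensive.
Import Order.TTheory GRing.Theory Num.Theory.
Local Open Scope ring_scope.

Section PoissonDefs.
Variable k : fieldType.

Definition klinear (U V : lmodType k) (f : U -> V) : Prop :=
  (forall u v, f (u + v) = f u + f v) /\ (forall (c : k) u, f (c *: u) = c *: f u).

Definition kalg_morph (A C : comAlgType k) (f : A -> C) : Prop :=
  [/\ klinear f, forall a b, f (a * b) = f a * f b & f 1 = 1].

Definition poisson_bracket (A : comAlgType k) (br : A -> A -> A) : Prop :=
  [/\ forall a, klinear (br a),
      forall b, klinear (br^~ b),
      forall a b, br a b = - br b a,
      forall a b c, br a (br b c) + br b (br c a) + br c (br a b) = 0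
    & forall a b c, br a (b * c) = br a b * c + b * br a c].

Definition derivation (A : comAlgType k) (d : A -> A) : Prop :=
  klinear d /\ forall a b, d (a * b) = d a * b + a * d b.

Definition poisson_derivation (A : comAlgType k) (br : A -> A -> A) (d : A -> A) :=
  derivation d /\ forall a b, d (br a b) = br (d a) b + br a (d b).

(* Finite Laurent sum  sum_{0<=i<N} iota(f i) x^i + iota(g i) x^{-(i+1)},
   where xi is the inverse of x. *)
Definition laurent_sum (B L : comAlgType k) (iota : B -> L) (x xi : L)
  (N : nat) (f g : nat -> B) : L :=
  \sum_(i < N) (iota (f i) * x ^+ i + iota (g i) * xi ^+ i.+1).

(* (L, iota, x) is a Laurent polynomial algebra B[x^{+-1}] over B:
   iota : B -> L is a k-algebra map, x is a unit with inverse xi, and the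
   integer powers of x form a basis of L as a (left) B-module via iota. *)
Definition is_laurent (B L : comAlgType k) (iota : B -> L) (x xi : L) : Prop :=
  [/\ kalg_morph iota,
      x * xi = 1,
      forall z : L, exists N f g, z = laurent_sum iota x xi N f g
    & forall N f g, laurent_sum iota x xi N f g = 0 ->
        forall i, (i < N)%N -> f i = 0 /\ g i = 0].

End PoissonDefs.

From HB Require Import structures.
From mathcomp Require Import all_boot all_order all_algebra.
From mathcomp Require Import ring.
Set Implicit Arguments. Unset Strict Implicit. Unset Printing Implicit Defensive.
Import Order.TTheory GRing.Theory Num.Theory.
Local Open Scope ring_scope.

(* Put t = -1/s. As delta is locally nilpotent, e^{t delta X}(b) = sum_n t^n/n! delta^n(b) X^n
   is a polynomial, and b |-> e^{t delta X}(b) is multiplicative: both sides have the same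
   constant term and satisfy the differential equation d/dX P = t P o delta, whose polynomial
   solutions are determined by their constant term in characteristic zero. Evaluating at
   X = x^-1 gives theta; the universal property of Laurent algebras extends it to Theta with
   Theta(y) = x, and the same construction with -t and y^-1 gives the inverse. The same
   differential argument shows that theta preserves the bracket of B, and the relation
   alpha delta = delta (alpha + s) gives {x, theta(b)} = theta(alpha b) x. Since both sides of
   Theta {u, v} = {Theta u, Theta v} are Theta-derivations in each variable, it suffices to
   check it on generators; uniqueness holds because B and x generate. *)

Section KalgMorph.
Variables (k : fieldType) (A C : comAlgType k) (f : A -> C).
Hypothesis hf : kalg_morph f.

Lemma kalg_morph_zmod : zmod_morphism f.
Proof. by case: hf => -[fD fZ] _ _ a b; rewrite fD -scaleN1r fZ scaleN1r. Qed.

Lemma kalg_morph_monoid : monoid_morphism f.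
Proof. by case: hf => _ fM f1; split. Qed.

Definition kalg_rmorphism : {rmorphism A -> C} :=
  HB.pack f (GRing.isZmodMorphism.Build A C f kalg_morph_zmod)
            (GRing.isMonoidMorphism.Build A C f kalg_morph_monoid).

Lemma kalg_morphZ (c : k) a : f (c *: a) = c *: f a. Proof. by case: hf => -[]. Qed.
Lemma kalg_morph0 : f 0 = 0. Proof. exact: (rmorph0 kalg_rmorphism). Qed.
Lemma kalg_morph1 : f 1 = 1. Proof. exact: (rmorph1 kalg_rmorphism). Qed.
Lemma kalg_morphD a b : f (a + b) = f a + f b. Proof. exact: (rmorphD kalg_rmorphism). Qed.
Lemma kalg_morphN a : f (- a) = - f a. Proof. exact: (rmorphN kalg_rmorphism). Qed.
Lemma kalg_morphM a b : f (a * b) = f a * f b. Proof. exact: (rmorphM kalg_rmorphism). Qed.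
Lemma kalg_morphMn a n : f (a *+ n) = f a *+ n. Proof. exact: (rmorphMn kalg_rmorphism). Qed.
Lemma kalg_morphXn a n : f (a ^+ n) = f a ^+ n. Proof. exact: (rmorphXn kalg_rmorphism). Qed.

Lemma kalg_morph_inverse (a ai : A) (c ci : C) :
  a * ai = 1 -> c * ci = 1 -> f a = c -> f ai = ci.
Proof.
move=> hai hci hfa; have e : f a * f ai = 1 by rewrite -kalg_morphM hai kalg_morph1.
by rewrite -[f ai]mul1r -hci mulrAC -hfa e mul1r.
Qed.

End KalgMorph.

Lemma kalg_morph_id (k : fieldType) (A : comAlgType k) : kalg_morph (@id A).
Proof. by []. Qed.

Lemma kalg_morph_comp (k : fieldType) (A B C : comAlgType k) (f : A -> B) (g : B -> C) :
  kalg_morph f -> kalg_morph g -> kalg_morph (g \o f).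
Proof.
case=> -[fD fZ] fM f1 [] [gD gZ] gM g1.
by split; [split=> * /=|move=> * /=|]; rewrite /= ?fD ?fZ ?fM ?f1 ?gD ?gZ ?gM ?g1.
Qed.

Section Klinear.
Variables (k : fieldType) (U V : lmodType k) (f : U -> V).
Hypothesis hf : klinear f.

Lemma klinear0 : f 0 = 0.
Proof. by case: hf => _ fZ; rewrite -(scale0r 0) fZ scale0r. Qed.
Lemma klinearD u v : f (u + v) = f u + f v. Proof. by case: hf. Qed.
Lemma klinearZ (c : k) u : f (c *: u) = c *: f u. Proof. by case: hf. Qed.
Lemma klinearN u : f (- u) = - f u. Proof. by rewrite -scaleN1r klinearZ scaleN1r. Qed.
Lemma klinearB u v : f (u - v) = f u - f v. Proof. by rewrite klinearD klinearN. Qed.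
Lemma klinearMn u n : f (u *+ n) = f u *+ n. Proof. by rewrite -!scaler_nat klinearZ. Qed.

End Klinear.

Lemma klinear_iter (k : fieldType) (U : lmodType k) (f : U -> U) n :
  klinear f -> klinear (iter n f).
Proof.
move=> hf; elim: n => [|n [IHD IHZ]]; first by [].
by split=> [u v|c u] /=; rewrite ?IHD ?IHZ ?(klinearD hf) ?(klinearZ hf).
Qed.

Lemma mul_inv_expr (R : comPzRingType) (a ai : R) n : a * ai = 1 -> ai ^+ n * a ^+ n = 1.
Proof. by move=> h; rewrite -exprMn mulrC h expr1n. Qed.

Section PolyEval.
Variables (k : fieldType) (B C : comAlgType k) (phi : B -> C).
Hypothesis hphi : kalg_morph phi.
Variable u : C.

Definition peval (p : {poly B}) : C := (map_poly phi p).[u].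

Let phiR := kalg_rmorphism hphi.

Lemma pevalD p q : peval (p + q) = peval p + peval q.
Proof. by rewrite /peval (rmorphD (map_poly phiR)) hornerD. Qed.
Lemma pevalN p : peval (- p) = - peval p.
Proof. by rewrite /peval (rmorphN (map_poly phiR)) hornerN. Qed.
Lemma pevalB p q : peval (p - q) = peval p - peval q.
Proof. by rewrite pevalD pevalN. Qed.
Lemma pevalM p q : peval (p * q) = peval p * peval q.
Proof. by rewrite /peval (rmorphM (map_poly phiR)) hornerM. Qed.
Lemma peval0 : peval 0 = 0.
Proof. by rewrite /peval map_poly0 horner0. Qed.
Lemma pevalC c : peval c%:P = phi c.
Proof. by rewrite /peval (map_polyC phiR) hornerC. Qed.
Lemma pevalXn n : peval 'X^n = u ^+ n.
Proof. by rewrite /peval (map_polyXn phiR) hornerXn. Qed.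
Lemma pevalX : peval 'X = u.
Proof. by rewrite -['X]expr1 pevalXn expr1. Qed.
Lemma peval_sum n (F : 'I_n -> {poly B}) : peval (\sum_(i < n) F i) = \sum_(i < n) peval (F i).
Proof. exact: (big_morph _ pevalD peval0). Qed.

Lemma peval_wide n (p : {poly B}) : (size p <= n)%N -> peval p = \sum_(i < n) phi p`_i * u ^+ i.
Proof.
move=> hn; rewrite /peval (horner_coef_wide _ (leq_trans (size_poly _ _) hn)).
by apply: eq_bigr => i _; rewrite (coef_map phiR).
Qed.

End PolyEval.

Lemma peval_comp (k : fieldType) (B C D : comAlgType k) (phi : B -> C) (F : C -> D)
  (hF : kalg_morph F) (u : C) p :
  F (peval phi u p) = peval (F \o phi) (F u) p.
Proof.
rewrite /peval -[F _]/(kalg_rmorphism hF _) -horner_map -map_poly_comp.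
by congr (_.[_]); apply: eq_map_poly.
Qed.

Section Laurent.
Variables (k : fieldType) (B L : comAlgType k) (iota : B -> L) (x xi : L).
Hypothesis hL : is_laurent iota x xi.

Let hiota : kalg_morph iota. Proof. by case: hL. Qed.
Let hx : x * xi = 1. Proof. by case: hL. Qed.

Lemma laurent_rep z : exists N (p : {poly B}), z = xi ^+ N * peval iota x p.
Proof.
case: hL => _ _ hspan _; have [N [f [g ->]]] := hspan z.
exists N, (\sum_(i < N) ((f i)%:P * 'X^(i + N) + (g i)%:P * 'X^(N - i.+1))).
rewrite (peval_sum hiota) mulr_sumr; apply: eq_bigr => i _.
rewrite (pevalD hiota) !(pevalM hiota) !(pevalC hiota) !(pevalXn hiota) mulrDr.
congr (_ + _).
  rewrite exprD -[LHS]mulr1 -(mul_inv_expr N hx); ring.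
rewrite -[in xi ^+ N](subnKC (ltn_ord i)) exprD.
rewrite -[LHS]mulr1 -(mul_inv_expr (N - i.+1) hx); ring.
Qed.

Lemma laurent_rep2 z z' : exists N (p q : {poly B}),
  z = xi ^+ N * peval iota x p /\ z' = xi ^+ N * peval iota x q.
Proof.
have [N [p ->]] := laurent_rep z; have [M [q ->]] := laurent_rep z'.
exists (N + M), (p * 'X^M), (q * 'X^N).
rewrite !(pevalM hiota) !(pevalXn hiota) exprD; split.
  by rewrite -[LHS]mulr1 -(mul_inv_expr M hx); ring.
by rewrite -[LHS]mulr1 -(mul_inv_expr N hx); ring.
Qed.

Lemma peval_laurent_inj (p : {poly B}) : peval iota x p = 0 -> p = 0.
Proof.
case: hL => _ _ _ hfree hp0; apply/polyP => i; rewrite coef0.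
have hsum : laurent_sum iota x xi (size p) (fun i => p`_i) (fun=> 0) = 0.
  rewrite -hp0 (peval_wide hiota _ (leqnn _)); apply: eq_bigr => j _.
  by rewrite (kalg_morph0 hiota) mul0r addr0.
case: (ltnP i (size p)) => [/(hfree _ _ _ hsum) [] //|hi].
by rewrite nth_default.
Qed.

Section LaurentLift.
Variables (C : comAlgType k) (phi : B -> C) (u ui : C).
Hypotheses (hphi : kalg_morph phi) (hu : u * ui = 1).

Lemma laurent_lift_wd N M p q :
  xi ^+ N * peval iota x p = xi ^+ M * peval iota x q ->
  ui ^+ N * peval phi u p = ui ^+ M * peval phi u q.
Proof.
move=> h.
have hxpq : x ^+ M * peval iota x p = x ^+ N * peval iota x q.
  transitivity (x ^+ (N + M) * (xi ^+ N * peval iota x p)).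
    by rewrite exprD -[LHS]mulr1 -(mul_inv_expr N hx); ring.
  by rewrite h exprD -[RHS]mulr1 -(mul_inv_expr M hx); ring.
have hpq : p * 'X^M = q * 'X^N.
  apply/eqP; rewrite -subr_eq0; apply/eqP/peval_laurent_inj.
  by rewrite (pevalB hiota) !(pevalM hiota) !(pevalXn hiota) mulrC hxpq mulrC subrr.
transitivity (ui ^+ (N + M) * peval phi u (p * 'X^M)).
  by rewrite (pevalM hphi) (pevalXn hphi) exprD -[LHS]mulr1 -(mul_inv_expr M hu); ring.
by rewrite hpq (pevalM hphi) (pevalXn hphi) exprD -[RHS]mulr1 -(mul_inv_expr N hu); ring.
Qed.

Let rep_ex z : exists np : nat * {poly B}, z == xi ^+ np.1 * peval iota x np.2.
Proof. by have [N [p ->]] := laurent_rep z; exists (N, p). Qed.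

Definition laurent_lift z :=
  let np := xchoose (rep_ex z) in ui ^+ np.1 * peval phi u np.2.

Lemma laurent_liftE N p : laurent_lift (xi ^+ N * peval iota x p) = ui ^+ N * peval phi u p.
Proof. by apply: laurent_lift_wd; rewrite -(eqP (xchooseP (rep_ex _))). Qed.

Lemma laurent_lift_morph : kalg_morph laurent_lift.
Proof.
split; first split.
- move=> z z'; have [N [p [q [-> ->]]]] := laurent_rep2 z z'.
  by rewrite -mulrDr -(pevalD hiota) !laurent_liftE (pevalD hphi) mulrDr.
- move=> c z; have [N [p ->]] := laurent_rep z.
  have -> : c *: (xi ^+ N * peval iota x p) = xi ^+ N * peval iota x (c%:A%:P * p).
    by rewrite (pevalM hiota) (pevalC hiota) (kalg_morphZ hiota) (kalg_morph1 hiota) mulrCA mulr_algl.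
  rewrite !laurent_liftE (pevalM hphi) (pevalC hphi).
  by rewrite (kalg_morphZ hphi) (kalg_morph1 hphi) mulrCA mulr_algl.
- move=> z z'; have [N [p ->]] := laurent_rep z; have [M [q ->]] := laurent_rep z'.
  by rewrite mulrACA -exprD -(pevalM hiota) !laurent_liftE (pevalM hphi) exprD; ring.
- have := laurent_liftE 0 1%:P.
  by rewrite !mul1r (pevalC hiota) (pevalC hphi) (kalg_morph1 hiota) (kalg_morph1 hphi).
Qed.

Lemma laurent_lift_iota b : laurent_lift (iota b) = phi b.
Proof. by have := laurent_liftE 0 b%:P; rewrite !mul1r (pevalC hiota) (pevalC hphi). Qed.

Lemma laurent_lift_x : laurent_lift x = u.
Proof. by have := laurent_liftE 0 'X; rewrite !mul1r (pevalX hiota) (pevalX hphi). Qed.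

End LaurentLift.

Lemma laurent_ext (C : comAlgType k) (phi : B -> C) (u ui : C) :
  kalg_morph phi -> u * ui = 1 ->
  exists F : L -> C, [/\ kalg_morph F, forall b, F (iota b) = phi b & F x = u].
Proof.
move=> hphi hu; exists (laurent_lift phi u ui).
by split; [exact: laurent_lift_morph | exact: laurent_lift_iota | exact: laurent_lift_x].
Qed.

Lemma laurent_morph_eq (C : comAlgType k) (F G : L -> C) :
  kalg_morph F -> kalg_morph G ->
  (forall b, F (iota b) = G (iota b)) -> F x = G x -> F =1 G.
Proof.
move=> hF hG hFG hFGx z; have [N [p ->]] := laurent_rep z.
have hFGxi : F xi = G xi.
  by apply: (kalg_morph_inverse hF hx _ hFGx); rewrite -(kalg_morphM hG) hx (kalg_morph1 hG).
rewrite !(kalg_morphM hF) !(kalg_morphM hG) !(kalg_morphXn hF) !(kalg_morphXn hG) hFGxi.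
rewrite !(peval_comp _ hF) !(peval_comp _ hG) hFGx /peval; congr (_ * _.[_]).
by apply: eq_map_poly => b /=.
Qed.

Lemma laurent_derivation_eq (C : comAlgType k) (T : L -> C) (d1 d2 : L -> C) :
  kalg_morph T ->
  (forall u v, d1 (u + v) = d1 u + d1 v) -> (forall u v, d1 (u * v) = d1 u * T v + T u * d1 v) ->
  (forall u v, d2 (u + v) = d2 u + d2 v) -> (forall u v, d2 (u * v) = d2 u * T v + T u * d2 v) ->
  (forall b, d1 (iota b) = d2 (iota b)) -> d1 x = d2 x -> d1 =1 d2.
Proof.
move=> hT d1D d1M d2D d2M hb hdx.
have der0 (d : L -> C) : (forall u v, d (u + v) = d u + d v) -> d 0 = 0.
  by move=> dD; apply: (addrI (d 0)); rewrite -dD !addr0.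
have der1 (d : L -> C) : (forall u v, d (u * v) = d u * T v + T u * d v) -> d 1 = 0.
  by move=> dM; apply: (addrI (d 1)); rewrite addr0 -{3}[1]mulr1 dM (kalg_morph1 hT) mulr1 mul1r.
have derxi (d : L -> C) :
    (forall u v, d (u * v) = d u * T v + T u * d v) -> d xi = - (T xi * T xi * d x).
  move=> dM; have h : d x * T xi + T x * d xi = 0 by rewrite -dM hx der1.
  have e : T x * T xi = 1 by rewrite -(kalg_morphM hT) hx (kalg_morph1 hT).
  have -> : d xi = T xi * (T x * d xi) by rewrite mulrCA mulrA e mul1r.
  have -> : T x * d xi = - (d x * T xi) by apply/eqP; rewrite -addr_eq0 addrC h.
  by ring.
pose S v := d1 v = d2 v.
have SD u v : S u -> S v -> S (u + v) by rewrite /S d1D d2D => -> ->.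
have SM u v : S u -> S v -> S (u * v) by rewrite /S d1M d2M => -> ->.
have SXn v n : S v -> S (v ^+ n).
  by move=> hv; elim: n => [|n IH]; [rewrite /S !expr0 der1 // der1 | rewrite exprS; apply: (SM)].
move=> z; have [N [p ->]] := laurent_rep z.
apply: (SM); first by apply: (SXn); rewrite /S (derxi _ d1M) (derxi _ d2M) hdx.
rewrite (peval_wide hiota _ (leqnn _)); apply: (big_ind S) => [||i _].
- by rewrite /S der0 // der0.
- exact: SD.
- by apply: (SM); [exact: hb | exact: (SXn)].
Qed.

End Laurent.

Lemma sum_ord_widen0 (V : nmodType) n m (F : nat -> V) :
  (forall i, (n <= i)%N -> F i = 0) -> (n <= m)%N -> \sum_(i < m) F i = \sum_(i < n) F i.
Proof.
move=> hF hnm; rewrite (big_ord_widen m F hnm) [RHS]big_mkcond; apply: eq_bigr => i _.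
by case: ltnP => // h; rewrite hF.
Qed.

Section CharZero.
Variable k : fieldType.
Hypothesis char0 : [pchar k] =i pred0.

Lemma mulrSnI (V : lmodType k) (u v : V) n : u *+ n.+1 = v *+ n.+1 -> u = v.
Proof.
have nz : (n.+1%:R : k) != 0 by have /pcharf0P -> := char0.
rewrite -!scaler_nat => /(congr1 (fun z => (n.+1%:R)^-1 *: z)).
by rewrite !scalerA mulVf // !scale1r.
Qed.

Lemma deriv_inj (B : comAlgType k) (p q : {poly B}) : p^`() = q^`() -> p`_0 = q`_0 -> p = q.
Proof. by move=> hd h0; apply/polyP => -[//|i]; apply: (@mulrSnI _ _ _ i); rewrite -!coef_deriv hd. Qed.

End CharZero.

Section ExpDerivation.
Variables (k : fieldType) (B : comAlgType k) (delta : B -> B).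
Hypotheses (char0 : [pchar k] =i pred0) (hdelta : derivation delta).
Hypothesis hnil : forall b, exists n, iter n delta b = 0.

Let hdlin : klinear delta. Proof. by case: hdelta. Qed.
Let hdn n : klinear (iter n delta). Proof. exact: klinear_iter. Qed.

Lemma deltaM a b : delta (a * b) = delta a * b + a * delta b. Proof. by case: hdelta. Qed.
Lemma delta1 : delta 1 = 0.
Proof. by apply: (addrI (delta 1)); rewrite addr0 -{3}[1]mulr1 deltaM mulr1 mul1r. Qed.

Lemma iter_delta_ge N n b : iter N delta b = 0 -> (N <= n)%N -> iter n delta b = 0.
Proof. by move=> h /subnK <-; rewrite iterD h (klinear0 (hdn _)). Qed.

Lemma nilpotent_ind2 (P : B -> B -> Prop) :
  (forall b, P 0 b) -> (forall a, P a 0) ->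
  (forall a b, P (delta a) b -> P a (delta b) -> P a b) -> forall a b, P a b.
Proof.
move=> P0l P0r Pdelta a b; have [i hi] := hnil a; have [j hj] := hnil b.
move: {2}(i + j)%N (leqnn (i + j)) => n.
elim: n a b i j hi hj => [|n IH] a b [|i] [|j] //= ha hb hn; rewrite ?ha ?hb //.
apply: Pdelta; [apply: (IH _ _ i j.+1) | apply: (IH _ _ i.+1 j)]; rewrite -?iterSr //.
all: by move: hn; rewrite ?addSn ?addnS ltnS.
Qed.

Definition expc (t : k) n := ((n`!)%:R)^-1 * t ^+ n.

Lemma expc0 t : expc t 0 = 1. Proof. by rewrite /expc invr1 mul1r expr0. Qed.

Lemma expcS t n : expc t n.+1 *+ n.+1 = t * expc t n.
Proof.
have nz : (n.+1%:R : k) != 0 by have /pcharf0P -> := char0.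
rewrite /expc factS natrM invfM -mulr_natr exprS [_ * n.+1%:R]mulrC !mulrA mulfV // mul1r.
by ring.
Qed.

Let nilpotent_ex b : exists n, iter n delta b == 0.
Proof. by have [n hn] := hnil b; exists n; apply/eqP. Qed.

Definition nilindex b := ex_minn (nilpotent_ex b).

Lemma iter_nilindex b : iter (nilindex b) delta b = 0.
Proof. by rewrite /nilindex; case: ex_minnP => n /eqP. Qed.

Lemma nilindex_min b N : iter N delta b = 0 -> (nilindex b <= N)%N.
Proof. by rewrite /nilindex; case: ex_minnP => n _ h /eqP /h. Qed.

(* [e^{t delta X} b = sum_n t^n/n! delta^n(b) X^n]; the paper's [theta] is [theta] below, its
   value at [X = x^-1]. *)
Definition expd t b : {poly B} := \poly_(n < nilindex b) (expc t n *: iter n delta b).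

Lemma coef_expd t b n : (expd t b)`_n = expc t n *: iter n delta b.
Proof.
rewrite /expd coef_poly; case: ltnP => // h.
by rewrite (iter_delta_ge (iter_nilindex b) h) scaler0.
Qed.

Lemma size_expd_le t b N : iter N delta b = 0 -> (size (expd t b) <= N)%N.
Proof. by move=> h; apply: leq_trans (size_poly _ _) (nilindex_min h). Qed.

Lemma coef0_expd t b : (expd t b)`_0 = b.
Proof. by rewrite coef_expd expc0 scale1r. Qed.

Lemma expd0 t : expd t 0 = 0.
Proof. by apply/polyP => i; rewrite coef_expd (klinear0 (hdn _)) scaler0 coef0. Qed.

Lemma expdD t a b : expd t (a + b) = expd t a + expd t b.
Proof. by apply/polyP => i; rewrite coefD !coef_expd (klinearD (hdn _)) scalerDr. Qed.

Lemma expdB t a b : expd t (a - b) = expd t a - expd t b.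
Proof. by apply/polyP => i; rewrite coefB !coef_expd (klinearB (hdn _)) scalerBr. Qed.

Lemma expdZ t (c : k) a : expd t (c *: a) = c%:A%:P * expd t a.
Proof. by apply/polyP => i; rewrite coefCM !coef_expd (klinearZ (hdn _)) mulr_algl !scalerA mulrC. Qed.

Lemma expd1 t : expd t 1 = 1.
Proof.
apply/polyP => -[|i]; rewrite coef_expd coefC ?expc0 ?scale1r //.
by rewrite iterSr delta1 (klinear0 (hdn _)) scaler0.
Qed.

Lemma deriv_expd t b : (expd t b)^`() = t%:A%:P * expd t (delta b).
Proof.
apply/polyP => i; rewrite coef_deriv coefCM !coef_expd -iterSr.
by rewrite -scaler_nat scalerA mulrC mulr_natr expcS mulr_algl scalerA.
Qed.

(* Both sides have constant term [ab] and satisfy the same differential equation. *)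
Lemma expdM t a b : expd t (a * b) = expd t a * expd t b.
Proof.
move: a b; apply: nilpotent_ind2 => [b|a|a b IHa IHb]; rewrite ?(mul0r, mulr0, expd0) //.
apply: (deriv_inj char0); last by rewrite coefM big_ord1 !coef0_expd.
by rewrite derivM !deriv_expd deltaM expdD IHa IHb; ring.
Qed.

(* The derivative of the left-hand side telescopes. *)
Lemma expd_sum_inv t b N : iter N delta b = 0 ->
  \sum_(n < N) (expc t n)%:A%:P * 'X^n * expd (- t) (iter n delta b) = b%:P.
Proof.
case: N => [/= ->|N hN]; first by rewrite big_ord0.
pose U n := (expc t n)%:A%:P * 'X^n * expd (- t) (iter n.+1 delta b).
have hU0 : U N = 0 by rewrite /U hN expd0 mulr0.
apply: (deriv_inj char0); last first.
  rewrite coef_sum big_ord_recl big1 => [|i _]; last by rewrite -mulrA coefCM coefXnM /= mulr0.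
  by rewrite expc0 scale1r expr0 polyC1 !mul1r coef0_expd coefC /= addr0.
have hderiv0 : ((expc t 0)%:A%:P * 'X^0 * expd (- t) b)^`() = - (t%:A%:P * U 0).
  by rewrite /U expc0 scale1r polyC1 expr0 !mul1r deriv_expd scaleNr polyCN; ring.
have hderivS n : ((expc t n.+1)%:A%:P * 'X^(n.+1) * expd (- t) (iter n.+1 delta b))^`() =
    t%:A%:P * U n - t%:A%:P * U n.+1.
  have hc : (expc t n.+1)%:A%:P *+ n.+1 = t%:A%:P * ((expc t n)%:A : B)%:P.
    by rewrite -polyCMn -polyCM scalerMnl expcS mulr_algl scalerA.
  rewrite /U !derivM derivC mul0r add0r derivXn /= deriv_expd.
  by rewrite mulrnAr -mulrnAl hc scaleNr polyCN; ring.
rewrite derivC raddf_sum big_ord_recl /= hderiv0.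
rewrite (eq_bigr (fun i : 'I_N => t%:A%:P * U i - t%:A%:P * U i.+1)) => [|i _]; last exact: hderivS.
rewrite -(big_mkord xpredT (fun i => t%:A%:P * U i - t%:A%:P * U i.+1)).
rewrite (@telescope_sumr_eq _ _ _ (fun i => - (t%:A%:P * U i))) // => [|i _].
  by rewrite hU0 mulr0 oppr0 add0r subrr.
by rewrite opprK addrC.
Qed.

Section ExpPoisson.
Variables (brB : B -> B -> B) (alpha : B -> B) (s : k).
Hypotheses (hB : poisson_bracket brB) (halpha : poisson_derivation brB alpha)
  (hdelta_br : forall a b, delta (brB a b) =
      brB (delta a) b + brB a (delta b) + alpha a * delta b - delta a * alpha b).
Hypothesis halphadelta : forall b, alpha (delta b) = delta (alpha b + s *: b).

Let halin : klinear alpha. Proof. by case: halpha => -[]. Qed.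
Let hbrr a : klinear (brB a). Proof. by case: hB. Qed.
Let hbrl b : klinear (brB^~ b). Proof. by case: hB. Qed.

Lemma alpha_iter_delta n b :
  alpha (iter n delta b) = iter n delta (alpha b) + (n%:R * s) *: iter n delta b.
Proof.
elim: n => [|n IH] /=; first by rewrite mul0r scale0r addr0.
rewrite halphadelta IH -addrA -scalerDl (klinearD hdlin) (klinearZ hdlin).
by rewrite mulrSr mulrDl mul1r.
Qed.

Lemma delta_alpha b : delta (alpha b) = alpha (delta b) - s%:A * delta b.
Proof. by rewrite halphadelta (klinearD hdlin) (klinearZ hdlin) mulr_algl addrK. Qed.

Definition twist a b := alpha a * delta b - delta a * alpha b.

Lemma twist0l b : twist 0 b = 0.
Proof. by rewrite /twist (klinear0 hdlin) (klinear0 halin) !mul0r subrr. Qed.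
Lemma twist0r a : twist a 0 = 0.
Proof. by rewrite /twist (klinear0 hdlin) (klinear0 halin) !mulr0 subrr. Qed.

Lemma delta_twist a b : delta (twist a b) = twist (delta a) b + twist a (delta b).
Proof. by rewrite /twist (klinearB hdlin) !deltaM !delta_alpha; ring. Qed.

Lemma delta_br a b : delta (brB a b) = brB (delta a) b + brB a (delta b) + twist a b.
Proof. by rewrite hdelta_br /twist addrA. Qed.

Lemma expd_twist t a b :
  expd t (twist a b) = expd t (alpha a) * expd t (delta b) - expd t (delta a) * expd t (alpha b).
Proof. by rewrite /twist expdB !expdM. Qed.

(* The coefficientwise bracket of [B[X]], for which [X] is Poisson central. *)
Definition polybr (p q : {poly B}) : {poly B} :=
  \sum_(i < size p) \sum_(j < size q) (brB p`_i q`_j)%:P * 'X^(i + j).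

Lemma polybr_wide n m (p q : {poly B}) : (size p <= n)%N -> (size q <= m)%N ->
  polybr p q = \sum_(i < n) \sum_(j < m) (brB p`_i q`_j)%:P * 'X^(i + j).
Proof.
move=> hn hm; rewrite /polybr.
rewrite [RHS](@sum_ord_widen0 _ (size p) n
  (fun i => \sum_(j < m) (brB p`_i q`_j)%:P * 'X^(i + j))) // => [|i hi].
  apply: eq_bigr => i _.
  rewrite [RHS](@sum_ord_widen0 _ (size q) m (fun j => (brB p`_i q`_j)%:P * 'X^(i + j))) // => j hj.
  by rewrite (nth_default _ hj) (klinear0 (hbrr _)) mul0r.
by apply: big1 => j _; rewrite (nth_default _ hi) (klinear0 (hbrl _)) mul0r.
Qed.

Lemma polybr0l q : polybr 0 q = 0.
Proof. by rewrite /polybr size_poly0 big_ord0. Qed.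
Lemma polybr0r p : polybr p 0 = 0.
Proof. by rewrite /polybr size_poly0; apply: big1 => i _; rewrite big_ord0. Qed.

Lemma coef0_polybr p q : (polybr p q)`_0 = brB p`_0 q`_0.
Proof.
rewrite (@polybr_wide (size p).+1 (size q).+1) // coef_sum big_ord_recl coef_sum big_ord_recl.
rewrite /= coefCM coefXn eqxx mulr1 big1 ?addr0 => [|j _]; last by rewrite coefCM coefXn mulr0.
by rewrite big1 ?addr0 // => i _; rewrite coef_sum big1 // => j _; rewrite coefCM coefXn mulr0.
Qed.

Lemma size_deriv_le (p : {poly B}) : (size p^`() <= size p)%N.
Proof. by have [->|/lt_size_deriv/ltnW //] := eqVneq p 0; rewrite deriv0. Qed.

Lemma deriv_polybr p q : (polybr p q)^`() = polybr p^`() q + polybr p q^`().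
Proof.
rewrite (@polybr_wide (size p).+1 (size q).+1) //.
rewrite (@polybr_wide (size p) (size q).+1 p^`()) ?size_deriv_le //.
rewrite (@polybr_wide (size p).+1 (size q) p q^`()) ?size_deriv_le // !raddf_sum /=.
have derivCXn (c : B) n : (c%:P * 'X^n)^`() = (c%:P * 'X^(n.-1)) *+ n.
  by rewrite derivM derivC mul0r add0r derivXn mulrnAr.
under eq_bigr => i _ do rewrite raddf_sum /=.
under eq_bigr => i _ do under eq_bigr => j _ do rewrite derivCXn mulrnDr.
under eq_bigr => i _ do rewrite big_split /=.
rewrite big_split /=; congr (_ + _).
  rewrite big_ord_recl big1 ?add0r => [|j _]; last by rewrite mulr0n.
  apply: eq_bigr => i _; apply: eq_bigr => j _.
  by rewrite coef_deriv (klinearMn (hbrl _)) polyCMn mulrnAl addSn.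
apply: eq_bigr => i _; rewrite big_ord_recl mulr0n add0r; apply: eq_bigr => j _.
by rewrite coef_deriv (klinearMn (hbrr _)) polyCMn mulrnAl addnS.
Qed.

Lemma polybrZl (c : k) p q : polybr (c%:A%:P * p) q = c%:A%:P * polybr p q.
Proof.
rewrite (@polybr_wide (size p) (size q) (c%:A%:P * p)) //; last by rewrite mul_polyC size_scale_leq.
rewrite /polybr mulr_sumr; apply: eq_bigr => i _; rewrite mulr_sumr; apply: eq_bigr => j _.
by rewrite coefCM mulr_algl (klinearZ (hbrl _)) -[c *: brB _ _]mulr_algl polyCM mulrA.
Qed.

Lemma polybrZr (c : k) p q : polybr p (c%:A%:P * q) = c%:A%:P * polybr p q.
Proof.
rewrite (@polybr_wide (size p) (size q) p (c%:A%:P * q)) //; last by rewrite mul_polyC size_scale_leq.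
rewrite /polybr mulr_sumr; apply: eq_bigr => i _; rewrite mulr_sumr; apply: eq_bigr => j _.
by rewrite coefCM mulr_algl (klinearZ (hbrr _)) -[c *: brB _ _]mulr_algl polyCM mulrA.
Qed.

Lemma expd_br t a b :
  expd t (brB a b) = polybr (expd t a) (expd t b) + t%:A%:P * ('X * expd t (twist a b)).
Proof.
move: a b; apply: nilpotent_ind2 => [b|a|a b IHa IHb].
- by rewrite (klinear0 (hbrl _)) expd0 polybr0l twist0l expd0 !mulr0 addr0.
- by rewrite (klinear0 (hbrr _)) expd0 polybr0r twist0r expd0 !mulr0 addr0.
apply: (deriv_inj char0); last first.
  by rewrite coefD coef0_polybr !coef0_expd coefCM coefXM /= mulr0 addr0.
rewrite deriv_expd delta_br (expdD t (_ + _)) (expdD t (brB _ _)) IHa IHb derivD deriv_polybr.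
rewrite !deriv_expd polybrZl polybrZr derivM derivC mul0r add0r derivM derivX mul1r deriv_expd.
by rewrite delta_twist (expdD t (twist _ _)); ring.
Qed.

Lemma map_expd_alpha t b :
  map_poly alpha (expd t b) = expd t (alpha b) + (s * t)%:A%:P * ('X * expd t (delta b)).
Proof.
apply/polyP => i; rewrite coefD coef_map_id0 ?(klinear0 halin) //.
rewrite coefCM coefXM !coef_expd (klinearZ halin) alpha_iter_delta scalerDr mulr_algl.
congr (_ + _); case: i => [|i] /=; first by rewrite mulr0n mul0r scale0r !scaler0.
rewrite -iterSr !scalerA; congr (_ *: _).
by rewrite -[RHS]mulrA -expcS -mulr_natr; ring.
Qed.

Lemma map_expd_delta t b : map_poly delta (expd t b) = expd t (delta b).
Proof.
by apply/polyP => i; rewrite coef_map_id0 ?(klinear0 hdlin) // !coef_expd (klinearZ hdlin) -iterSr.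
Qed.

End ExpPoisson.

End ExpDerivation.

Section PoissonBracket.
Variables (k : fieldType) (A : comAlgType k) (br : A -> A -> A).
Hypothesis hbr : poisson_bracket br.

Let hbrr u : klinear (br u). Proof. by case: hbr. Qed.
Let hbrl v : klinear (br^~ v). Proof. by case: hbr. Qed.

Lemma pbr0r u : br u 0 = 0. Proof. exact: klinear0 (hbrr u). Qed.
Lemma pbr0l v : br 0 v = 0. Proof. exact: (klinear0 (hbrl v)). Qed.
Lemma pbrDr u v z : br u (v + z) = br u v + br u z. Proof. by case: (hbrr u). Qed.
Lemma pbrDl u v z : br (u + v) z = br u z + br v z. Proof. by case: (hbrl z). Qed.
Lemma pbrC u v : br u v = - br v u. Proof. by case: hbr. Qed.
Lemma pbrMr u v z : br u (v * z) = br u v * z + v * br u z. Proof. by case: hbr. Qed.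
Lemma pbrMl u v z : br (v * z) u = br v u * z + v * br z u.
Proof. by rewrite pbrC pbrMr !(pbrC u) mulNr mulrN opprD !opprK. Qed.

Lemma pbr_sumr u n (F : 'I_n -> A) : br u (\sum_(i < n) F i) = \sum_(i < n) br u (F i).
Proof. exact: (big_morph _ (pbrDr u) (pbr0r u)). Qed.
Lemma pbr_suml v n (F : 'I_n -> A) : br (\sum_(i < n) F i) v = \sum_(i < n) br (F i) v.
Proof. exact: (big_morph _ (fun a b => pbrDl a b v) (pbr0l v)). Qed.

Lemma pbr1l u : br 1 u = 0.
Proof. by apply: (addrI (br 1 u)); rewrite addr0 -{3}[1]mulr1 pbrMl mulr1 mul1r. Qed.

Lemma pbr_exprr u v n : br u v = 0 -> br u (v ^+ n) = 0.
Proof.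
move=> huv; elim: n => [|n IH]; first by rewrite expr0 pbrC pbr1l oppr0.
by rewrite exprS pbrMr IH huv mul0r mulr0 addr0.
Qed.

Lemma pbr_exprl u v n : br u v = 0 -> br (u ^+ n) v = 0.
Proof. by move=> huv; rewrite pbrC pbr_exprr ?oppr0 // pbrC huv oppr0. Qed.

Hypothesis h2 : (2%:R : k) != 0.

Lemma pbr_self u : br u u = 0.
Proof.
have h : 2%:R *: br u u = 0 by rewrite scaler_nat mulr2n {1}pbrC addNr.
by rewrite -[br u u]scale1r -(mulVf h2) -scalerA h scaler0.
Qed.

Lemma pbr_expr u m n : br (u ^+ m) (u ^+ n) = 0.
Proof. exact/pbr_exprr/pbr_exprl/pbr_self. Qed.

Lemma pbr_inverse u ui : u * ui = 1 -> br u ui = 0.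
Proof.
move=> hu; have : br u (u * ui) = 0 by rewrite hu pbrC pbr1l oppr0.
rewrite pbrMr pbr_self mul0r add0r => h.
by rewrite -[br u ui]mul1r -hu mulrC mulrA (mulrC _ u) h mul0r.
Qed.

End PoissonBracket.

Lemma mulX_deriv (R : nzRingType) (q : {poly R}) : 'X * q^`() = \poly_(j < size q) (q`_j *+ j).
Proof.
apply/polyP => -[|j]; rewrite coefXM coef_poly /=; first by rewrite mulr0n if_same.
by rewrite coef_deriv; case: ltnP => // h; rewrite nth_default ?mul0rn.
Qed.

Section TargetBracket.
Variables (k : fieldType) (B L : comAlgType k) (brB : B -> B -> B) (alpha delta : B -> B).
Variables (iota : B -> L) (x w : L) (br : L -> L -> L).
Hypotheses (hiota : kalg_morph iota) (hxw : x * w = 1).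
Hypotheses (hbr : poisson_bracket br) (h2 : (2%:R : k) != 0).
Hypotheses (hbrB : forall a b, br (iota a) (iota b) = iota (brB a b))
  (hbrx : forall b, br x (iota b) = iota (alpha b) * x + iota (delta b)).

Lemma pbr_w_iota c : br w (iota c) = - ((iota (alpha c) + w * iota (delta c)) * w).
Proof.
have h : br x (iota c) * w + x * br w (iota c) = 0 by rewrite -(pbrMl hbr) hxw (pbr1l hbr).
have -> : br w (iota c) = w * (x * br w (iota c)) by rewrite mulrA (mulrC w) hxw mul1r.
have -> : x * br w (iota c) = - (br x (iota c) * w) by apply/eqP; rewrite -addr_eq0 addrC h.
rewrite hbrx; transitivity (- (w * iota (alpha c) * (x * w) + w * iota (delta c) * w)).
  by ring.
by rewrite hxw; ring.
Qed.

Lemma pbr_wexpr_iota m c :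
  br (w ^+ m) (iota c) = - ((iota (alpha c) + w * iota (delta c)) * w ^+ m) *+ m.
Proof.
elim: m => [|m IH]; first by rewrite expr0 (pbr1l hbr) mulr0n.
by rewrite exprS (pbrMl hbr) IH pbr_w_iota; ring.
Qed.

Lemma pbr_monomial a b m n : br (iota a * w ^+ m) (iota b * w ^+ n) =
  (iota (brB a b) - iota (a * alpha b) *+ m + iota (alpha a * b) *+ n +
   w * (iota (delta a * b) *+ n - iota (a * delta b) *+ m)) * w ^+ (m + n).
Proof.
rewrite (pbrMr hbr) !(pbrMl hbr) hbrB pbr_wexpr_iota (pbrC hbr (iota a)) pbr_wexpr_iota.
rewrite (pbr_expr hbr h2).
by rewrite !(kalg_morphM hiota) exprD; ring.
Qed.

Lemma pbr_x_peval p :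
  br x (peval iota w p) = x * peval iota w (map_poly alpha p) + peval iota w (map_poly delta p).
Proof.
have pbr_x_w n : br x (w ^+ n) = 0 := pbr_exprr hbr n (pbr_inverse hbr h2 hxw).
rewrite (peval_wide hiota w (leqnn _)) !(@peval_wide _ _ _ _ hiota w (size p)) ?size_poly //.
rewrite (pbr_sumr hbr) mulr_sumr -big_split.
apply: eq_bigr => i _ /=; rewrite (pbrMr hbr) pbr_x_w mulr0 addr0 hbrx !coef_poly ltn_ord; ring.
Qed.

(* [X d/dX] records the exponent of [w] that [{w ^+ m, -}] brings down. *)
Lemma pbr_peval p q : br (peval iota w p) (peval iota w q) = peval iota w (polybr brB p q) +
   peval iota w (map_poly alpha p * ('X * q^`()) - 'X * p^`() * map_poly alpha q) +
   w * peval iota w (map_poly delta p * ('X * q^`()) - 'X * p^`() * map_poly delta q).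
Proof.
have pevalF (f : B -> B) r : peval iota w (map_poly f r) = \sum_(i < size r) iota (f r`_i) * w ^+ i.
  by rewrite (peval_wide hiota w (size_poly _ _)); apply: eq_bigr => i _; rewrite coef_poly ltn_ord.
have pevalE r : peval iota w ('X * r^`()) = \sum_(i < size r) iota (r`_i *+ i) * w ^+ i.
  rewrite mulX_deriv (peval_wide hiota w (size_poly _ _)).
  by apply: eq_bigr => i _; rewrite coef_poly ltn_ord.
have pevalME P r : peval iota w (P * ('X * r^`())) = peval iota w P * peval iota w ('X * r^`()).
  exact: pevalM.
have pevalEM P r : peval iota w ('X * r^`() * P) = peval iota w ('X * r^`()) * peval iota w P.
  exact: pevalM.
rewrite !(pevalB hiota) !pevalME !pevalEM !pevalE !pevalF.
rewrite (peval_wide hiota w (leqnn (size p))) (peval_wide hiota w (leqnn (size q))).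
rewrite /polybr (peval_sum hiota) (pbr_suml hbr) !big_distrlr /= mulrBr !mulr_sumr.
rewrite -!sumrB -!big_split /=.
apply: eq_bigr => i _.
rewrite (peval_sum hiota) (pbr_sumr hbr) !mulr_sumr -!sumrB -!big_split /=; apply: eq_bigr => j _.
rewrite pbr_monomial (pevalM hiota) (pevalC hiota) (pevalXn hiota).
by rewrite !(kalg_morphMn hiota) !(kalg_morphM hiota) exprD; ring.
Qed.

Section Theta.
Hypotheses (char0 : [pchar k] =i pred0) (hdelta : derivation delta).
Hypothesis hnil : forall b, exists n, iter n delta b = 0.

Definition theta t b := peval iota w (expd hnil t b).

Lemma theta_sum t b N : iter N delta b = 0 ->
  theta t b = \sum_(n < N) expc t n *: (iota (iter n delta b) * w ^+ n).
Proof.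
move=> hN; rewrite /theta (peval_wide hiota w (size_expd_le hnil t hN)); apply: eq_bigr => i _.
by rewrite (coef_expd hdelta) (kalg_morphZ hiota) scalerAl.
Qed.

Lemma theta_morph t : kalg_morph (theta t).
Proof.
rewrite /theta; split; first split.
- by move=> a b; rewrite expdD // (pevalD hiota).
- move=> c a; rewrite expdZ // (pevalM hiota) (pevalC hiota).
  by rewrite (kalg_morphZ hiota) (kalg_morph1 hiota) mulr_algl.
- by move=> a b; rewrite expdM // (pevalM hiota).
- by rewrite expd1 // -polyC1 (pevalC hiota) (kalg_morph1 hiota).
Qed.

Variable s : k.
Hypotheses (hB : poisson_bracket brB) (halpha : poisson_derivation brB alpha)
  (hdelta_br : forall a b, delta (brB a b) =
      brB (delta a) b + brB a (delta b) + alpha a * delta b - delta a * alpha b).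
Hypothesis halphadelta : forall b, alpha (delta b) = delta (alpha b + s *: b).

(* For [s t = -1], the term [(s t) X e^{t delta X}(delta b)] of [map_poly alpha] cancels the
   [delta] part of [{x, -}]. *)
Lemma pbr_x_theta t b : s * t = -1 -> br x (theta t b) = theta t (alpha b) * x.
Proof.
move=> hst; rewrite /theta pbr_x_peval (map_expd_alpha char0 hdelta hnil halpha halphadelta).
rewrite (map_expd_delta hdelta).
rewrite (pevalD hiota) !(pevalM hiota) (pevalX hiota) (pevalC hiota) hst.
rewrite (kalg_morphZ hiota) (kalg_morph1 hiota) scaleN1r.
transitivity (peval iota w (expd hnil t (alpha b)) * x +
              peval iota w (expd hnil t (delta b)) * (1 - x * w)); first by ring.
by rewrite hxw subrr mulr0 addr0.
Qed.

Lemma pbr_theta t a b : br (theta t a) (theta t b) = theta t (brB a b).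
Proof.
rewrite /theta pbr_peval (expd_br char0 hdelta hnil hB halpha hdelta_br halphadelta).
have pevalXM P : w * peval iota w P = peval iota w ('X * P).
  by rewrite (pevalM hiota) (pevalX hiota).
rewrite (pevalD hiota) pevalXM -addrA; congr (_ + _).
rewrite -(pevalD hiota); congr (peval _ _ _).
rewrite !(deriv_expd char0 hdelta) !(map_expd_alpha char0 hdelta hnil halpha halphadelta).
by rewrite !(map_expd_delta hdelta) expd_twist //; ring.
Qed.

End Theta.

End TargetBracket.

Lemma theta_inverse (k : fieldType) (char0 : [pchar k] =i pred0) (B : comAlgType k)
  (delta : B -> B) (hdelta : derivation delta) (hnil : forall b, exists n, iter n delta b = 0)
  (L1 L2 : comAlgType k) (iota1 : B -> L1) (iota2 : B -> L2) (w1 : L1) (w2 : L2)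
  (F : L2 -> L1) (t : k) :
  kalg_morph iota1 -> kalg_morph iota2 -> kalg_morph F ->
  (forall c, F (iota2 c) = theta iota1 w1 hnil (- t) c) -> F w2 = w1 ->
  forall b, F (theta iota2 w2 hnil t b) = iota1 b.
Proof.
move=> hi1 hi2 hF hFi hFw b; have hN := iter_nilindex hnil b.
rewrite (theta_sum w2 hi2 hdelta hnil t hN) -[F _]/(kalg_rmorphism hF _) rmorph_sum.
rewrite -[iota1 b](pevalC hi1 w1) -(expd_sum_inv char0 hdelta hnil t hN) (peval_sum hi1).
apply: eq_bigr => n _; rewrite !(pevalM hi1) (pevalC hi1) (pevalXn hi1).
rewrite (kalg_morphZ hi1) (kalg_morph1 hi1) /= (kalg_morphZ hF) (kalg_morphM hF).
by rewrite (kalg_morphXn hF) hFi hFw mulr_algl -scalerAl mulrC.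
Qed.

Lemma laurent_bijective (k : fieldType) (B L1 L2 : comAlgType k)
  (iota1 : B -> L1) (y yi : L1) (iota2 : B -> L2) (x xi : L2) (F : L1 -> L2) (G : L2 -> L1) :
  is_laurent iota1 y yi -> is_laurent iota2 x xi -> kalg_morph F -> kalg_morph G ->
  (forall b, G (F (iota1 b)) = iota1 b) -> G (F y) = y ->
  (forall b, F (G (iota2 b)) = iota2 b) -> F (G x) = x -> bijective F.
Proof.
move=> hL1 hL2 hF hG hGF1 hGFy hFG1 hFGx; exists G.
- exact: (laurent_morph_eq hL1 (kalg_morph_comp hF hG) (kalg_morph_id _)).
- exact: (laurent_morph_eq hL2 (kalg_morph_comp hG hF) (kalg_morph_id _)).
Qed.

Section LaurentPoissonMorph.
Variables (k : fieldType) (B L1 L2 : comAlgType k) (iota : B -> L1) (y yi : L1).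
Variables (br1 : L1 -> L1 -> L1) (br2 : L2 -> L2 -> L2) (Theta : L1 -> L2).
Hypotheses (hL : is_laurent iota y yi) (hbr1 : poisson_bracket br1) (hbr2 : poisson_bracket br2).
Hypotheses (h2 : (2%:R : k) != 0) (hT : kalg_morph Theta).
Hypotheses (hTB : forall a b, Theta (br1 (iota a) (iota b)) = br2 (Theta (iota a)) (Theta (iota b)))
  (hTy : forall b, Theta (br1 y (iota b)) = br2 (Theta y) (Theta (iota b))).

Let compat u v := Theta (br1 u v) = br2 (Theta u) (Theta v).

Let compat_sym u v : compat u v -> compat v u.
Proof. by move=> h; rewrite /compat (pbrC hbr1) (kalg_morphN hT) h (pbrC hbr2 (Theta v)). Qed.

(* For fixed [u], both sides are [Theta]-derivations in [v]. *)
Let compat_gen u : (forall b, compat u (iota b)) -> compat u y -> forall v, compat u v.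
Proof.
apply: (laurent_derivation_eq hL hT) => [v z|v z|v z|v z].
- by rewrite (pbrDr hbr1) (kalg_morphD hT).
- by rewrite (pbrMr hbr1) (kalg_morphD hT) !(kalg_morphM hT).
- by rewrite (kalg_morphD hT) (pbrDr hbr2).
- by rewrite (kalg_morphM hT) (pbrMr hbr2).
Qed.

Lemma laurent_pbr_morph u v : Theta (br1 u v) = br2 (Theta u) (Theta v).
Proof.
have compat_y v' : compat y v'.
  apply: compat_gen v'; first exact: hTy.
  by rewrite /compat (pbr_self hbr1 h2) (pbr_self hbr2 h2) (kalg_morph0 hT).
have compat_iota a v' : compat (iota a) v'.
  by apply: compat_gen v' => [b|]; [exact: hTB | apply: compat_sym; exact: compat_y].
apply: compat_sym; apply: compat_gen u => [b|]; apply: compat_sym.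
- exact: compat_iota.
- exact: compat_y.
Qed.

End LaurentPoissonMorph.

Theorem theorem3p8
  (k : fieldType) (char0 : [pchar k] =i pred0)
  (B : comAlgType k) (brB : B -> B -> B) (hB : poisson_bracket brB)
  (alpha delta : B -> B)
  (halpha : poisson_derivation brB alpha)
  (hdelta : derivation delta)
  (hdelta_br : forall a b, delta (brB a b) =
      brB (delta a) b + brB a (delta b) + alpha a * delta b - delta a * alpha b)
  (hnil : forall b, exists n, iter n delta b = 0)
  (s : k) (hs : s != 0)
  (halphadelta : forall b, alpha (delta b) = delta (alpha b + s *: b))
  (* B[y^{+-1}; alpha]_p *)
  (L1 : comAlgType k) (iota1 : B -> L1) (y yi : L1)
  (hL1 : is_laurent iota1 y yi) (br1 : L1 -> L1 -> L1)
  (hbr1 : poisson_bracket br1)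
  (hbr1B : forall a b, br1 (iota1 a) (iota1 b) = iota1 (brB a b))
  (hbr1y : forall b, br1 y (iota1 b) = iota1 (alpha b) * y)
  (* B[x^{+-1}; alpha, delta]_p *)
  (L2 : comAlgType k) (iota2 : B -> L2) (x xi : L2)
  (hL2 : is_laurent iota2 x xi) (br2 : L2 -> L2 -> L2)
  (hbr2 : poisson_bracket br2)
  (hbr2B : forall a b, br2 (iota2 a) (iota2 b) = iota2 (brB a b))
  (hbr2x : forall b, br2 x (iota2 b) = iota2 (alpha b) * x + iota2 (delta b)) :
  let theta_spec (Theta : L1 -> L2) :=
    [/\ kalg_morph Theta, bijective Theta,
        forall u v, Theta (br1 u v) = br2 (Theta u) (Theta v),
        (* Theta extends theta(b) = sum_n (1/n!) (-1/s)^n delta^n(b) x^{-n} *)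
        forall b N, iter N delta b = 0 ->
          Theta (iota1 b) =
          \sum_(n < N) (((n`!)%:R)^-1 * (- s^-1) ^+ n) *: (iota2 (iter n delta b) * xi ^+ n)
      & Theta y = x] in
  exists Theta : L1 -> L2, theta_spec Theta /\
    forall Theta' : L1 -> L2, theta_spec Theta' -> Theta' =1 Theta.
Proof.
move=> theta_spec; have [hi1 hy _ _] := hL1; have [hi2 hx _ _] := hL2.
have h2 : (2%:R : k) != 0 by have /pcharf0P -> := char0.
pose t := - s^-1; have hst : s * t = -1 by rewrite mulrN mulfV.
have [Theta [hT hTi hTy]] := laurent_ext hL1 (theta_morph xi hi2 char0 hdelta hnil t) hx.
have [Psi [hP hPi hPx]] := laurent_ext hL2 (theta_morph yi hi1 char0 hdelta hnil (- t)) hy.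
have hPxi : Psi xi = yi := kalg_morph_inverse hP hx hy hPx.
have hTyi : Theta yi = xi := kalg_morph_inverse hT hy hx hTy.
have hTsum b N : iter N delta b = 0 -> Theta (iota1 b) =
    \sum_(n < N) (((n`!)%:R)^-1 * t ^+ n) *: (iota2 (iter n delta b) * xi ^+ n).
  by move=> hN; rewrite hTi (theta_sum xi hi2 hdelta hnil t hN).
have hspec : theta_spec Theta.
  split=> //.
  - apply: (laurent_bijective hL1 hL2 hT hP) => [b||b|]; rewrite ?hTy ?hPx //.
      by rewrite hTi (theta_inverse char0 hdelta hi1 hi2 hP hPi hPxi).
    have hTi' c : Theta (iota1 c) = theta iota2 xi hnil (- - t) c by rewrite opprK hTi.
    by rewrite hPi (theta_inverse char0 hdelta hi2 hi1 hT hTi' hTyi).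
  - apply: (laurent_pbr_morph hL1 hbr1 hbr2 h2 hT) => [a b|b].
      rewrite hbr1B !hTi.
      by rewrite (pbr_theta hi2 hx hbr2 h2 hbr2B hbr2x char0 hdelta hnil hB halpha hdelta_br
                            halphadelta).
    rewrite hbr1y (kalg_morphM hT) !hTi hTy.
    by rewrite (pbr_x_theta hi2 hx hbr2 h2 hbr2x char0 hdelta hnil halpha halphadelta).
exists Theta; split=> // Theta' [hT' _ _ hT'sum hT'y].
apply: (laurent_morph_eq hL1 hT' hT) => [b|]; last by rewrite hT'y hTy.
by have [N hN] := hnil b; rewrite (hT'sum b N hN) (hTsum b N hN).
Qed.
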